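(* Let $\Lambda\Subset\mathbb X$, let $Y\Subset\mathbb X$, let $\preceq$ be an arbitrary total order on $Y$ (strict part $\prec$), and suppose that $Z(\Lambda\mid\{y'\in Y\mid y'\prec y\})\neq0$ for all $y\in Y$. Then \[ R(Y,\Lambda)=\prod_{y\in Y}R\big(y,\Lambda\ \big|\ \{y'\in Y\mid y'\prec y\}\big). \]
   Context: $\mathbb X$ is a finite or countably infinite set, $X\Subset\mathbb X$ means finite subset, $\mathbf F$ is the set of finite subsets of $\mathbb X$. Fix $z:\mathbb X\to\mathbb C$, $W:\mathbf F\to\mathbb C$; $z^X=\prod_{y\in X}z(y)$; singletons $\{y\}$ are written $y$ inside arguments. Conditional interaction: $W(X\mid B)=\prod_{C\subset B}W(X\cup C)$ if $X\cap B=\varnothing$, $W(X\mid B)=0$ if $X=\{y\}$ with $y\in B$, and $W(X\mid B)=1$ otherwise. Boltzmann factor $\kappa(X\mid B)=\prod_{\varnothing\neq S\subset X}W(S\mid B)$. Partition functions $Z(X,\Lambda\mid B)=\sum_{Y'\subset\Lambda\setminus X}z^{X\cup Y'}\kappa(X\cup Y'\mid B)$, $Z(\Lambda\mid B)=Z(\varnothing,\Lambda\mid B)$, with $B$ omitted when $B=\varnothing$. Correlations $R(X,\Lambda\mid B)=Z(X,\Lambda\mid B)/Z(\Lambda\mid B)$ when $Z(\Lambda\mid B)\neq0$ (note $X$ need not be a subset of $\Lambda$). *)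

From HB Require Import structures.
From mathcomp Require Import all_boot all_order all_algebra.
From mathcomp Require Import finmap.
Set Implicit Arguments. Unset Strict Implicit. Unset Printing Implicit Defensive.
Import GRing.Theory.
Local Open Scope ring_scope.
Local Open Scope fset_scope.

(* The ambient set 𝕏 is a countType T; finite subsets X ⋐ 𝕏 are {fset T}.
   Values are in an arbitrary field F (ℂ is an instance). *)
Section Defs.
Variables (T : countType) (F : fieldType).
Variables (z : T -> F) (W : {fset T} -> F).

Definition zpow (X : {fset T}) : F := \prod_(y <- X) z y.

Definition Wcond (X B : {fset T}) : F :=
  if X `&` B == fset0 then \prod_(C <- fpowerset B) W (X `|` C)
  else if [exists y : X, (X == [fset val y]) && (val y \in B)] then 0
  else 1.

Definition kappa (X B : {fset T}) : F :=
  \prod_(S <- fpowerset X | S != fset0) Wcond S B.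

Definition Zpart (X Lam B : {fset T}) : F :=
  \sum_(Y' <- fpowerset (Lam `\` X)) zpow (X `|` Y') * kappa (X `|` Y') B.

(* R(X, Λ | B) = Z(X,Λ|B)/Z(Λ|B) (used only where Z(Λ|B) ≠ 0) *)
Definition Rcorr (X Lam B : {fset T}) : F := Zpart X Lam B / Zpart fset0 Lam B.
End Defs.

Definition total_order_on (T : choiceType) (Y : {fset T}) (le : rel T) : Prop :=
  [/\ {in Y, reflexive le},
      {in Y &, antisymmetric le},
      {in Y & &, forall y1 y2 y3, le y1 y2 -> le y2 y3 -> le y1 y3}
    & {in Y &, total le}].

Definition strict_below (T : choiceType) (Y : {fset T}) (le : rel T) (y : T) : {fset T} :=
  [fset y' in Y | le y' y && (y' != y)].

From HB Require Import structures.
From mathcomp Require Import all_boot all_order all_algebra.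
From mathcomp Require Import finmap.
Set Implicit Arguments. Unset Strict Implicit. Unset Printing Implicit Defensive.
Import GRing.Theory.
Local Open Scope ring_scope.
Local Open Scope fset_scope.

(* For disjoint A and X, the Boltzmann factor factorises as
   kappa(A u X) = kappa(A) kappa(X | A), because every nonempty S of A u X is
   either a subset of A or S' u C with S' a nonempty subset of X and C of A.
   Summing over the configurations outside A u X, and using that the
   conditional one-point interaction W(y | A) vanishes for y in A, gives
   Z(A u X, Lam) = z^A kappa(A) Z(X, Lam | A), whence the chain rule
   R(A u X, Lam) = R(A, Lam) R(X, Lam | A).  Peeling off the largest point of Y
   and inducting on #|Y| yields the product formula. *)

Section PowersetOfDisjointUnion.
Variable K : choiceType.
Implicit Types A X : {fset K}.

Lemma fsetUI_disjoint A X (S1 S2 : {fset K}) :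
  [disjoint A & X] -> S1 `<=` A -> S2 `<=` X -> (S1 `|` S2) `&` A = S1.
Proof.
move=> dAX S1A S2X; rewrite fsetIUl (fsetIidPl S1A).
have /eqP -> : S2 `&` A == fset0.
  by rewrite fsetI_eq0 fdisjoint_sym (fdisjointWr S2X dAX).
exact: fsetU0.
Qed.

Lemma fpowersetU A X : [disjoint A & X] ->
  fpowerset (A `|` X) = [fset S1 `|` S2 | S1 in fpowerset A, S2 in fpowerset X].
Proof.
move=> dAX; apply/fsetP => S; rewrite fpowersetE; apply/idP/imfset2P => /=.
  move=> SAX; exists (S `&` A); first by rewrite fpowersetE fsubsetIr.
  exists (S `&` X); first by rewrite fpowersetE fsubsetIr.
  by rewrite -fsetIUr; apply/esym/fsetIidPl.
by case=> S1; rewrite fpowersetE => S1A [S2]; rewrite fpowersetE => S2X ->; apply: fsetUSS.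
Qed.

Lemma big_fpowersetU (R : Type) (idx : R) (op : Monoid.com_law idx)
    A X (f : {fset K} -> R) : [disjoint A & X] ->
  \big[op/idx]_(S <- fpowerset (A `|` X)) f S =
  \big[op/idx]_(S1 <- fpowerset A) \big[op/idx]_(S2 <- fpowerset X) f (S1 `|` S2).
Proof.
move=> dAX; rewrite fpowersetU // big_imfset2 //=.
move=> [S1 S2] [S1' S2']; rewrite !inE /= !fpowersetE.
move=> /andP[S1A S2X] /andP[S1'A S2'X] /= E.
have dXA : [disjoint X & A] by rewrite fdisjoint_sym.
have e1 : S1 = S1'.
  by rewrite -(fsetUI_disjoint dAX S1A S2X) E (fsetUI_disjoint dAX S1'A S2'X).
have e2 : S2 = S2'.
  by rewrite -(fsetUI_disjoint dXA S2X S1A) fsetUC E fsetUC (fsetUI_disjoint dXA S2'X S1'A).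
by rewrite e1 e2.
Qed.

End PowersetOfDisjointUnion.

Section ChainRule.
Variables (T : countType) (F : fieldType) (z : T -> F) (W : {fset T} -> F).
Implicit Types A B X S : {fset T}.

Lemma zpowU A X : [disjoint A & X] -> zpow z (A `|` X) = zpow z A * zpow z X.
Proof.
move=> /fdisjointP dAX; rewrite /zpow (big_fsetID _ (mem A)) /=.
congr (_ * _); apply: eq_fbigl => x; rewrite !inE /=.
  by case: (x \in A); rewrite ?andbF ?andbT.
by case xA: (x \in A); rewrite /= ?andbT // (negbTE (dAX x xA)).
Qed.

Lemma Wcond0 S : Wcond W S fset0 = W S.
Proof. by rewrite /Wcond fsetI0 eqxx fpowerset0 big_seq_fset1 fsetU0. Qed.

Lemma Wcond_disjoint S B : [disjoint S & B] ->
  Wcond W S B = \prod_(C <- fpowerset B) W (S `|` C).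
Proof. by rewrite /Wcond fsetI_eq0 => ->. Qed.

Lemma kappaE X B :
  kappa W X B = \prod_(S <- fpowerset X) (if S != fset0 then Wcond W S B else 1).
Proof. exact: big_mkcond. Qed.

Lemma kappa_eq0 X B y : y \in X -> y \in B -> kappa W X B = 0.
Proof.
move=> yX yB; rewrite kappaE (big_fsetD1 [fset y]) /=; last by rewrite fpowersetE fsub1set.
have -> : [fset y] != fset0 by apply/fset0Pn; exists y; rewrite inE.
rewrite /Wcond fsetI_eq0 fdisjoint1X yB /=.
suff -> : [exists y' : [fset y], ([fset y] == [fset val y']) && (val y' \in B)] by rewrite mul0r.
by apply/existsP; exists [` fset11 y]; rewrite /= eqxx.
Qed.

Lemma kappaU A X : [disjoint A & X] ->
  kappa W (A `|` X) fset0 = kappa W A fset0 * kappa W X A.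
Proof.
move=> dAX; rewrite !kappaE big_fpowersetU // exchange_big /=.
have fset0_sub (Y : {fset T}) : fset0 \in fpowerset Y by rewrite fpowersetE fsub0set.
rewrite (big_fsetD1 fset0 (fset0_sub X)) [in RHS](big_fsetD1 fset0 (fset0_sub X)) eqxx /= mul1r.
congr (_ * _); first by apply: eq_bigr => S1 _; rewrite fsetU0.
apply: eq_fbigr => S2; rewrite !inE fpowersetE => /andP[S2n0 S2X] _.
rewrite S2n0 Wcond_disjoint; last by rewrite fdisjoint_sym (fdisjointWr S2X dAX).
apply: eq_bigr => S1 _.
by rewrite fsetU_eq0 negb_and S2n0 orbT Wcond0 fsetUC.
Qed.

Lemma ZpartU A X Lam : [disjoint A & X] ->
  Zpart z W (A `|` X) Lam fset0 = zpow z A * kappa W A fset0 * Zpart z W X Lam A.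
Proof.
move=> dAX; rewrite /Zpart mulr_sumr.
have sub : fpowerset (Lam `\` (A `|` X)) `<=` fpowerset (Lam `\` X).
  by rewrite fpowersetS fsetDS // fsubsetUr.
(* the extra configurations on the right meet A, so their weight kappa(_ | A) is 0 *)
rewrite -(big_fset_incl _ sub); last first.
- move=> Y'; rewrite !fpowersetE => Y'LX /fsubsetPn[y yY' yN].
  move: (fsubsetP Y'LX y yY'); rewrite !inE => /andP[yX yL].
  have yA : y \in A by apply: contraNT yN => yA; rewrite !inE negb_or yA yX yL.
  by rewrite [kappa W _ A](@kappa_eq0 _ _ y) ?mulr0 // inE yY' orbT.
- apply: eq_fbigr => Y'; rewrite fpowersetCE fdisjointXU => /and3P[_ dY'A _] _.
  have dAXY : [disjoint A & X `|` Y'] by rewrite fdisjointXU dAX fdisjoint_sym.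
  by rewrite -fsetUA zpowU // kappaU // mulrACA.
Qed.

(* No hypothesis Z(Lam) != 0 is needed: if it vanishes, both sides are 0. *)
Lemma RcorrU A X Lam : [disjoint A & X] -> Zpart z W fset0 Lam A != 0 ->
  Rcorr z W (A `|` X) Lam fset0 = Rcorr z W A Lam fset0 * Rcorr z W X Lam A.
Proof.
move=> dAX ZA; have := ZpartU Lam (fdisjointX0 A); rewrite fsetU0 => ZpartA.
rewrite /Rcorr ZpartU // ZpartA -!mulrA; congr (_ * (_ * _)).
by rewrite [RHS]mulrCA [Zpart _ _ fset0 _ _ * _]mulrCA mulfV // mulr1 mulrC.
Qed.

End ChainRule.

Section TotalOrder.
Variables (T : choiceType) (le : rel T).
Implicit Types Y : {fset T}.

Lemma total_order_on_sub Y' Y : Y' `<=` Y -> total_order_on Y le -> total_order_on Y' le.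
Proof.
move=> /fsubsetP sY'Y [refl anti trans tot]; split.
- by move=> x /sY'Y; apply: refl.
- by move=> x y /sY'Y xY /sY'Y; apply: anti.
- by move=> x y w /sY'Y xY /sY'Y yY /sY'Y; apply: trans.
- by move=> x y /sY'Y xY /sY'Y; apply: tot.
Qed.

(* A point with the largest lower set dominates Y, by totality and transitivity. *)
Lemma total_order_on_max Y : total_order_on Y le -> Y != fset0 ->
  exists2 m, m \in Y & {in Y, forall y, le y m}.
Proof.
case=> refl _ trans tot /fset0Pn[y0 y0Y].
pose below m := [fset y in Y | le y m].
case: (@arg_maxnP Y [` y0Y] predT (fun i => #|` below (val i)|) isT) => -[m mY] _ /= maxm.
exists m => // y yY; apply/contraT => Nle_ym.
have le_my : le m y by case/orP: (tot m y mY yY); rewrite ?(negbTE Nle_ym).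
have : below m `<` below y.
  rewrite fproperE; apply/andP; split; last by apply/fsubsetPn; exists y; rewrite !inE yY ?refl.
  by apply/fsubsetP => x; rewrite !inE => /andP[xY le_xm]; rewrite xY (trans x m y).
by move/fproper_ltn_card; rewrite ltnNge (maxm [` yY]).
Qed.

Section Maximum.
Variables (Y : {fset T}) (m : T).
Hypotheses (ordY : total_order_on Y le) (mY : m \in Y) (maxm : {in Y, forall y, le y m}).

Lemma strict_below_max : strict_below Y le m = Y `\ m.
Proof.
apply/fsetP => y; rewrite !inE /=; case: (boolP (y \in Y)) => yY; last by rewrite andbF.
by rewrite maxm //= andbT.
Qed.

Lemma strict_below_fsetD_max y : y \in Y `\ m ->
  strict_below (Y `\ m) le y = strict_below Y le y.
Proof.
rewrite !inE => /andP[ym yY]; apply/fsetP => y'; rewrite !inE /=.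
case: (eqVneq y' m) => [->|] //=; apply/esym/negbTE/negP => /and3P[_ le_my _].
have [_ anti _ _] := ordY.
by move: ym; rewrite (anti y m) ?eqxx ?maxm ?le_my.
Qed.

End Maximum.
End TotalOrder.

Theorem lemma4p4 (T : countType) (F : fieldType) (z : T -> F) (W : {fset T} -> F)
    (Lam Y : {fset T}) (le : rel T) :
  total_order_on Y le ->
  (forall y, y \in Y -> Zpart z W fset0 Lam (strict_below Y le y) != 0) ->
  Zpart z W fset0 Lam fset0 != 0 ->
  Rcorr z W Y Lam fset0 = \prod_(y <- Y) Rcorr z W [fset y] Lam (strict_below Y le y).
Proof.
move=> + + Z0; have [n] := ubnP #|`Y|; elim: n Y => // n IH Y.
case: (eqVneq Y fset0) => [-> _ _ _|Yn0 cardY ordY ZY].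
  by rewrite big_seq_fset0 /Rcorr divff.
have [m mY maxm] := total_order_on_max ordY Yn0.
have ordYm : total_order_on (Y `\ m) le by apply: total_order_on_sub ordY; apply: fsubsetDl.
have below_Ym := strict_below_fsetD_max ordY mY maxm.
have dYm_m : [disjoint Y `\ m & [fset m]] by rewrite fdisjointX1 fsetD11.
have ZYm : Zpart z W fset0 Lam (Y `\ m) != 0 by rewrite -(strict_below_max maxm) ZY.
rewrite -{1}(fsetD1K mY) fsetUC RcorrU // (big_fsetD1 m mY) /= strict_below_max //.
rewrite mulrC IH //.
- by congr (_ * _); apply: eq_fbigr => y /below_Ym ->.
- by move: cardY; rewrite (cardfsD1 m) mY.
- by move=> y /[dup] /below_Ym -> /fsetD1P[_ /ZY].
Qed.
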